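(* Let $G$ be an undirected graph, $D\ge1$ an integer, and let $G^D$ denote the graph on $V(G)$ in which distinct vertices $u,v$ are adjacent iff $G$ contains a path of length at most $D$ between them. Let $v_1,\ldots,v_k$ be an independent set in $G^D$. Let $(s,t)$ be a pair of vertices with $(s,t)\notin E(G)$, let $G'=(V(G),E(G)\cup\{(s,t)\})$, and let $H'$ be the subgraph of $(G')^D$ induced by $\{v_1,\ldots,v_k\}$. Then there exists $i\in\{1,\ldots,k\}$ such that every edge of $H'$ (if any) is incident to $v_i$. In particular, if $G^D$ has an independent set of size $k$, then $(G')^D$ has an independent set of size $k-1$. *)

From mathcomp Require Import all_boot.
Set Implicit Arguments. Unset Strict Implicit. Unset Printing Implicit Defensive.

(* A finite undirected graph on vertex type T is a symmetric irreflexive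
   relation e : rel T. *)

Definition add_edge (T : eqType) (e : rel T) (s t : T) : rel T :=
  fun x y => [|| e x y, (x == s) && (y == t) | (x == t) && (y == s)].

Definition path_le (T : eqType) (e : rel T) (D : nat) (u v : T) : Prop :=
  exists p : seq T, [/\ path e u p, last u p = v, uniq (u :: p) & size p <= D].

Definition powadj (T : eqType) (e : rel T) (D : nat) (u v : T) : Prop :=
  u <> v /\ path_le e D u v.

Definition indep_pow (T : finType) (e : rel T) (D : nat) (S : {set T}) : Prop :=
  forall x y, x \in S -> y \in S -> ~ powadj e D x y.

From Pilot Require Import Defs.
From mathcomp Require Import all_boot.
From mathcomp Require Import zify.
From Stdlib Require Import Classical.

(* A short path in G' between
   two vertices of S that are not joined by a short path in G must use the new
   edge; cutting it at the new edge yields an "arc" x ~> s -- t ~> y (or the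
   reverse) made of two G-walks of total length < D.  Two arcs x ~> y and
   x' ~> y' of S with x <> x' and y <> y' are impossible: either the two
   s-halves or the two t-halves together form a G-walk of length <= D between
   two distinct vertices of S.  Hence any two arcs share their tail or their
   head, and a purely combinatorial lemma shows that all arcs then share one
   common vertex v.  Every G'^D-edge inside S is an arc in one direction, so it
   touches v, and S minus v is independent in G'^D. *)

Set Implicit Arguments.
Unset Strict Implicit.
Unset Printing Implicit Defensive.

(* If any two related pairs of R share their first or their second component,
   then one point v lies in every related pair (v0 serves when R is empty). *)
Lemma common_endpoint (A : Type) (R : A -> A -> Prop) (v0 : A) :
  (forall x y x' y', R x y -> R x' y' -> x = x' \/ y = y') ->
  exists v, forall x y, R x y -> x = v \/ y = v.
Proof.
move=> meet.
case: (classic (exists x y, R x y)) => [[x [y Rxy]] | noR]; last first.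
  by exists v0 => x y Rxy; case: noR; exists x, y.
case: (classic (exists x' y', R x' y' /\ x' <> x)) => [[x' [y' [Rxy' nx]]] | all_x].
- (* a pair with another tail forces every head to be y *)
  exists y => u w Ruw; right.
  have y'y : y' = y by case: (meet _ _ _ _ Rxy' Rxy) => // /nx.
  case: (meet _ _ _ _ Ruw Rxy) => [ux | //]; subst u y'.
  by case: (meet _ _ _ _ Ruw Rxy') => // /esym /nx.
- exists x => u w Ruw; left.
  by apply: NNPP => nux; apply: all_x; exists u, w.
Qed.

Section Walks.
Variable T : eqType.
Implicit Types (e : rel T) (u v w : T).

Definition walk e (k : nat) u v : Prop :=
  exists q : seq T, [/\ path e u q, last u q = v & size q <= k].

Lemma size_shorten (x : T) (q : seq T) : size (shorten x q) <= size q.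
Proof.
elim: q x => [|y q IHq] x //=; case: ifP => _ /=; first exact: leq_trans (IHq x) _.
by rewrite ltnS.
Qed.

(* Removing the loops of a walk gives a path: walks bound [Defs.path_le]. *)
Lemma walk_path_le e k u v : walk e k u v -> Defs.path_le e k u v.
Proof.
case=> q [e_q <- size_q]; move: (size_shorten u q).
case: (shortenP e_q) => p e_p uniq_p _ size_p; exists p; split=> //.
exact: leq_trans size_p size_q.
Qed.

Lemma walk_le e k k' u v : k <= k' -> walk e k u v -> walk e k' u v.
Proof. by move=> le_kk' [q [? ? size_q]]; exists q; split=> //; apply: leq_trans le_kk'. Qed.

Lemma walk_cat e k1 k2 u v w : walk e k1 u v -> walk e k2 v w -> walk e (k1 + k2) u w.
Proof.
case=> q1 [e_q1 last_q1 size_q1] [q2 [e_q2 last_q2 size_q2]].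
exists (q1 ++ q2); split; first by rewrite cat_path e_q1 last_q1.
  by rewrite last_cat last_q1.
by rewrite size_cat leq_add.
Qed.

Lemma walk_rev e k u v : symmetric e -> walk e k u v -> walk e k v u.
Proof.
move=> sym_e [q [e_q <- size_q]]; exists (rev (belast u q)); split.
- by rewrite rev_path; apply: sub_path e_q => x y; rewrite sym_e.
- by case: q {e_q size_q} => //= y q; rewrite rev_cons last_rcons.
- by rewrite size_rev size_belast.
Qed.

(* A path of G' = G + st either avoids the new edge, or it is a G-walk to an
   endpoint a of st followed by the new edge and a G-walk from an endpoint c
   of st (cut at the last use of the new edge, so c may equal a). *)
Lemma add_edge_path e s t x p :
  path (add_edge e s t) x p ->
  path e x p \/ exists a c k1 k2, [/\ a \in [:: s; t], c \in [:: s; t],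
     k1 + k2 < size p, walk e k1 x a & walk e k2 c (last x p)].
Proof.
have new_edge y z : ~~ e y z -> add_edge e s t y z ->
    y \in [:: s; t] /\ z \in [:: s; t].
  rewrite /add_edge => /negbTE -> /= /orP[] /andP[/eqP -> /eqP ->];
  by rewrite !inE !eqxx ?orbT.
elim: p x => [|z p IHp] x /=; first by left.
case/andP=> e'_xz /IHp [e_p | [a [c [k1 [k2 [a_st c_st lt_k wa wc]]]]]].
- case e_xz: (e x z); first by left; rewrite e_p.
  have [x_st z_st] := new_edge _ _ (negbT e_xz) e'_xz.
  right; exists x, z, 0, (size p); split=> //; first by exists [::].
  by exists p.
- right; case e_xz: (e x z).
  + exists a, c, k1.+1, k2; split=> //.
    by case: wa => q [? ? ?]; exists (z :: q); split=> //=; rewrite e_xz.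
  + have [x_st _] := new_edge _ _ (negbT e_xz) e'_xz.
    exists x, c, 0, k2; split=> //; first by lia.
    by exists [::].
Qed.

End Walks.

Section OneNewEdge.
Variables (T : finType) (e : rel T) (D : nat) (s t : T) (S : {set T}).
Hypothesis sym_e : symmetric e.
Hypothesis indS : indep_pow e D S.

Lemma indep_walk k x y : x \in S -> y \in S -> k <= D -> walk e k x y -> x = y.
Proof.
move=> xS yS le_kD w; case: (eqVneq x y) => [// | /eqP nxy].
by case: (indS xS yS); split=> //; apply: walk_path_le (walk_le le_kD w).
Qed.

(* [arc x y]: x reaches s and t reaches y by G-walks of total length < D, so
   x ~> s -- t ~> y is a G'-walk of length <= D through the new edge. *)
Definition arc (x y : T) : Prop :=
  exists k1 k2, [/\ k1 + k2 < D, walk e k1 x s & walk e k2 t y].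

Lemma arcs_meet x y x' y' : x \in S -> y \in S -> x' \in S -> y' \in S ->
  arc x y -> arc x' y' -> x = x' \/ y = y'.
Proof.
move=> xS yS x'S y'S [k1 [k2 [lt_k wxs wty]]] [k1' [k2' [lt_k' wx's wty']]].
case: (leqP (k1 + k1') D) => [le_D | lt_D].
- left; apply: (indep_walk xS x'S le_D).
  exact: walk_cat wxs (walk_rev sym_e wx's).
- right; apply: (indep_walk yS y'S (_ : k2 + k2' <= D)); first by lia.
  exact: walk_cat (walk_rev sym_e wty) wty'.
Qed.

Lemma powadj_arc x y : x \in S -> y \in S ->
  powadj (add_edge e s t) D x y -> arc x y \/ arc y x.
Proof.
move=> xS yS [nxy [p [e'_p last_p _ size_p]]].
case: (add_edge_path e'_p) => [e_p | [a [c [k1 [k2 [a_st c_st lt_k wxa wcy]]]]]].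
  by exfalso; apply: nxy; apply: (indep_walk xS yS size_p); exists p.
rewrite last_p in wcy.
have lt_kD : k1 + k2 < D by apply: leq_trans size_p.
case: (eqVneq a c) => [ac | nac].
  subst c; exfalso; apply: nxy; apply: (indep_walk xS yS (ltnW lt_kD)).
  exact: walk_cat wxa wcy.
move: a_st c_st nac wxa wcy; rewrite !inE.
case/orP=> /eqP -> /orP[] /eqP -> //; rewrite ?eqxx // => _ wxa wcy.
- by left; exists k1, k2.
- by right; exists k2, k1; rewrite addnC; split=> //; apply: walk_rev.
Qed.

Lemma powadj_center : S != set0 ->
  exists2 v, v \in S & forall x y, x \in S -> y \in S ->
    powadj (add_edge e s t) D x y -> x = v \/ y = v.
Proof.
case/set0Pn=> v0 v0S.
pose R x y := [/\ x \in S, y \in S & arc x y].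
have [v center] : exists v, forall x y, R x y -> x = v \/ y = v.
  apply: (common_endpoint v0) => x y x' y' [xS yS a] [x'S y'S a'].
  exact: arcs_meet a a'.
have on_edges x y : x \in S -> y \in S ->
    powadj (add_edge e s t) D x y -> x = v \/ y = v.
  move=> xS yS /(powadj_arc xS yS) [a | a].
  - by apply: center; split.
  - by case: (center y x) => [|->|->]; [split | right | left].
(* if the common vertex lies outside S, there are no edges inside S at all *)
have [vS | vNS] := boolP (v \in S); first by exists v.
exists v0 => // x y xS yS /(on_edges x y xS yS) [xv | yv].
- by move: xS; rewrite xv (negbTE vNS).
- by move: yS; rewrite yv (negbTE vNS).
Qed.

End OneNewEdge.

Lemma indep_remove_center (T : finType) (e : rel T) (D : nat) (S : {set T}) v :
  (forall x y, x \in S -> y \in S -> powadj e D x y -> x = v \/ y = v) ->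
  indep_pow e D (S :\ v).
Proof.
move=> center x y; rewrite !inE => /andP[nxv xS] /andP[nyv yS] /(center x y xS yS).
by case=> /eqP; [rewrite (negbTE nxv) | rewrite (negbTE nyv)].
Qed.

Theorem mainTheorem11 (T : finType) (e : rel T) (D : nat) (s t : T) :
  symmetric e -> irreflexive e -> 1 <= D -> ~~ e s t ->
  (forall S : {set T}, S != set0 -> indep_pow e D S ->
     exists2 vi, vi \in S &
       forall x y, x \in S -> y \in S -> powadj (add_edge e s t) D x y ->
         x = vi \/ y = vi)
  /\
  (forall k : nat, (exists S : {set T}, indep_pow e D S /\ #|S| = k) ->
     exists S' : {set T}, indep_pow (add_edge e s t) D S' /\ #|S'| = k.-1).
Proof.
move=> sym_e _ _ _.
split=> [S nS indS | k [S [indS <-]]]; first exact: powadj_center.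
case: (eqVneq S set0) => [-> | nS].
  by exists set0; split; [move=> x y; rewrite inE | rewrite cards0].
have [v vS center] := powadj_center s t sym_e indS nS.
exists (S :\ v); split; first exact: indep_remove_center.
by rewrite (cardsD1 v S) vS.
Qed.
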